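(* For every positive integer $n$ and complex parameters $a,b$ (with all denominators nonzero), \begin{align*} \sum_{k=0}^n \frac{(q^{-n}, q^n; q)_k\, q^k}{(q/a, q/b; q)_k} ={}&(-1)^n q^{n(n+1)/2} (1-q^n) \frac{(a, b; q)_n}{(q/a, q/b; q)_n}\biggl(\frac{1}{ab}\biggr)^n \Biggl\{\frac{1-ab}{(1-a)(1-b)}+\frac{(1/a, 1/b; q)_n}{(1-q^n)(a, b; q)_n} (-ab)^n q^{-n(n-1)/2}\\ &+(1-ab)\sum_{j=1}^{n-1} \frac{(1+q^j) (1/a, 1/b; q)_j}{ (a, b; q)_{j+1}} (-ab)^j q^{-j(j-1)/2}\Biggr\}. \end{align*}
   Context: Throughout, $q$ is a complex number with $0<|q|<1$. For $x\in\mathbb{C}$ and an integer $n\ge 0$, $(x;q)_n=\prod_{k=0}^{n-1}(1-xq^k)$, and $(x_1,\dots,x_m;q)_n=(x_1;q)_n\cdots(x_m;q)_n$. *)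

From mathcomp Require Import all_boot all_order all_algebra.
From mathcomp Require Export complex.
Set Implicit Arguments. Unset Strict Implicit. Unset Printing Implicit Defensive.
Import Order.TTheory GRing.Theory Num.Theory.
Local Open Scope ring_scope.

Definition qpoch {F : comRingType} (x q : F) (n : nat) : F :=
  \prod_(k < n) (1 - x * q ^+ k).

(* Write S_n for the left-hand side and x = q^n.  Creative telescoping
   (the q-Zeilberger algorithm) gives an inhomogeneous three-term recurrence
   c0(x) S_n + c1(x) S_(n+1) + c2(x) S_(n+2) = - g(x): the combination of the
   summands is the k-difference of a certificate G(n,k), and summing over k
   leaves G(n,n+3) - G(n,0) = - g(x).  The right-hand side has the form
   P_n (C + D_n + (1 - ab) W_n), where P_(n+1) / P_n, P_n D_n and P_n t_n
   (t_n the terms of W_n) are rational functions of x; so checking that it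
   obeys the same recurrence is an identity of rational functions.  Both sides
   agree for n = 1, 2, and c2(q^n) != 0 propagates the equality. *)

From mathcomp Require Import all_boot all_order all_algebra.
From mathcomp Require Import complex.
From mathcomp Require Import ring zify.
Set Implicit Arguments.
Unset Strict Implicit.
Unset Printing Implicit Defensive.
Import Order.TTheory GRing.Theory Num.Theory.
Local Open Scope ring_scope.
Local Open Scope complex_scope.

Ltac field_ctx :=
  field; rewrite ?subr_eq0 ?oner_eq0 ?[1 == _]eq_sym; by repeat (apply/andP; split).

Lemma half_mulnS n : ((n * n.+1)./2 = (n * n.-1)./2 + n)%N.
Proof.
case: n => [|n] //.
have -> : (n.+1 * n.+2 = n.+1 * n + n.+1.*2)%N by rewrite -mul2n; nia.
by rewrite halfD odd_double andbF add0n doubleK.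
Qed.

Section QPochhammer.
Variable R : comNzRingType.
Implicit Types c q : R.

Lemma qpoch0 c q : qpoch c q 0 = 1.
Proof. by rewrite /qpoch big_ord0. Qed.

Lemma qpochS c q n : qpoch c q n.+1 = qpoch c q n * (1 - c * q ^+ n).
Proof. by rewrite /qpoch big_ord_recr. Qed.

Lemma qpochSl c q n : qpoch c q n.+1 = (1 - c) * qpoch (c * q) q n.
Proof.
rewrite /qpoch big_ord_recl expr0 mulr1; congr (_ * _).
by apply: eq_bigr => i _; rewrite /bump /= exprS mulrA.
Qed.

Lemma qpoch_shift c q n :
  qpoch (c * q) q n * (1 - c) = qpoch c q n * (1 - c * q ^+ n).
Proof. by rewrite mulrC -qpochSl qpochS. Qed.

End QPochhammer.

Section QPochhammerDomain.
Variable R : idomainType.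
Implicit Types c q : R.

Lemma qpoch_neq0P c q n :
  reflect (forall k, (k < n)%N -> 1 - c * q ^+ k != 0) (qpoch c q n != 0).
Proof.
apply: (iffP (prodf_neq0 _ _)) => [nz k kn|nz k _]; last exact: nz.
exact: (nz (Ordinal kn)).
Qed.

Lemma qpoch_neq0_le c q m n : (m <= n)%N -> qpoch c q n != 0 -> qpoch c q m != 0.
Proof.
move=> le_mn /qpoch_neq0P nz; apply/qpoch_neq0P => k km.
exact/nz/(leq_trans km).
Qed.

End QPochhammerDomain.

Lemma qpoch_qpowN_eq0 (F : fieldType) (q : F) m n :
  q != 0 -> (m < n)%N -> qpoch (q ^- m) q n = 0.
Proof.
move=> q0 lt_mn; apply/eqP; apply: contraT => /qpoch_neq0P/(_ m lt_mn).
by rewrite mulVf ?subrr ?eqxx // expf_neq0.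
Qed.

Lemma expr_neq1 (R : numDomainType) (x : R) n : `|x| < 1 -> (0 < n)%N -> x ^+ n != 1.
Proof.
move=> x_lt1 n_gt0; apply/eqP => xn1.
have : `|x| ^+ n < 1 by rewrite exprn_ilt1 // -lt0n.
by rewrite -normrX xn1 normr1 ltxx.
Qed.

Section QPochhammerField.
Variables (F : fieldType) (q : F).

Lemma qpoch_neq0_factor c n k : qpoch c q n != 0 -> (k < n)%N -> c * q ^+ k != 1.
Proof. by move=> /qpoch_neq0P nz /nz; rewrite subr_eq0 eq_sym. Qed.

Lemma qpochV_neq0_qpow c n k :
  c != 0 -> qpoch c^-1 q n != 0 -> (k < n)%N -> c != q ^+ k.
Proof.
move=> c0 nz lt_kn; apply/eqP => c_qpow.
by move: (qpoch_neq0_factor nz lt_kn); rewrite -c_qpow mulVf ?eqxx.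
Qed.

Lemma qpoch_div_neq0_qpow c n j :
  c != 0 -> qpoch (q / c) q n != 0 -> (0 < j)%N -> (j <= n)%N -> c != q ^+ j.
Proof.
move=> c0 nz; case: j => // j _ lt_jn.
apply/eqP => c_qpow.
by move: (qpoch_neq0_factor nz lt_jn); rewrite mulrAC -exprS -c_qpow mulfV ?eqxx.
Qed.

Lemma qpochV_neq0 c n : c != 1 -> qpoch (q / c) q n != 0 -> qpoch c^-1 q n.+1 != 0.
Proof.
move=> c1 nz; rewrite qpochSl [c^-1 * q]mulrC mulf_neq0 //.
by rewrite subr_eq0 eq_sym invr_eq1.
Qed.

Lemma qpochV_shift c n : c != 0 -> c != q ^+ n ->
  qpoch c^-1 q n = qpoch (q / c) q n * (1 - c^-1) / (1 - c^-1 * q ^+ n).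
Proof.
move=> c0 c_qpow; rewrite [q / c]mulrC qpoch_shift mulfK // subr_eq0 eq_sym.
by apply: contra c_qpow => /eqP/(congr1 (GRing.mul c)); rewrite mulVKf // mulr1 => <-.
Qed.
End QPochhammerField.

Lemma rec2_uniq (R : idomainType) (c0 c1 c2 g u v : nat -> R) N :
  (forall m, (0 < m)%N -> (m.+2 <= N)%N -> c2 m != 0) ->
  (forall m, (0 < m)%N -> (m.+2 <= N)%N ->
     c0 m * u m + c1 m * u m.+1 + c2 m * u m.+2 = g m) ->
  (forall m, (0 < m)%N -> (m.+2 <= N)%N ->
     c0 m * v m + c1 m * v m.+1 + c2 m * v m.+2 = g m) ->
  u 1 = v 1 -> ((1 < N)%N -> u 2 = v 2) ->
  forall n, (0 < n <= N)%N -> u n = v n.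
Proof.
move=> c2_neq0 rec_u rec_v uv1 uv2.
have uv_next m : (m.+2 <= N)%N -> u m.+1 = v m.+1 /\ u m.+2 = v m.+2.
  elim: m => [|m IH] le_mN; first by split; last exact: uv2.
  have [uv_m1 uv_m2] := IH (ltnW le_mN); split => //.
  apply: (mulfI (c2_neq0 m.+1 isT le_mN)).
  apply: (addrI (c0 m.+1 * u m.+1 + c1 m.+1 * u m.+2)).
  by rewrite rec_u // {1}uv_m1 uv_m2 rec_v.
by case=> [|[|n]] // /andP[_ le_nN]; case: (uv_next n le_nN).
Qed.

Section Identity.
Variables (F : fieldType) (q a b : F).
Hypotheses (q_neq0 : q != 0) (a_neq0 : a != 0) (b_neq0 : b != 0).
Hypotheses (a_neq1 : a != 1) (b_neq1 : b != 1).

(* Coefficients and inhomogeneity of the recurrence, as functions of x = q^m,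
   found by the q-Zeilberger algorithm. *)
Definition rec_coef0 x := - ((1 - (a * x)^-1) * (1 - (b * x)^-1))
  / ((1 - (x * x * q)^-1) * (1 - (x * x * q * q)^-1)).
Definition rec_beta x := - ((1 - x * q * q / a) * (1 - x * q * q / b))
  / ((1 - x * x * q * q) * (1 - x * x * q * q * q)).
Definition rec_coef1 x :=
  (-1 - rec_beta x - rec_coef0 x + q) * (1 - x) / (1 - (x * q)^-1).
Definition rec_coef2 x :=
  rec_beta x * (1 - x) * (1 - x * q) / ((1 - (x * q)^-1) * (1 - (x * q * q)^-1)).
Definition rec_inhom x :=
  (1 - a^-1) * (1 - b^-1) / ((1 - (x * q)^-1) * (1 - (x * q * q)^-1)).
Definition rec_regular x := [&& x != 0, x != 1, x * q != 1, x * q * q != 1,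
  x * x * q != 1, x * x * q * q != 1 & x * x * q * q * q != 1].

(* With y = q^k: A_i = ((x q^(i-1))^-1; q)_k, B_i = (x q^(i-1); q)_k,
   Da = (q/a; q)_k and Ea = (1/a; q)_k; the hypotheses are their contiguity
   relations. *)
Lemma summand_rec_alg x y A1 A2 A3 B1 B2 B3 Da Db Ea Eb :
  rec_regular x ->
  Ea != 0 -> Eb != 0 -> a != y -> b != y ->
  A1 * (1 - (x * q)^-1) = A2 * (1 - (x * q)^-1 * y) ->
  A2 * (1 - (x * q * q)^-1) = A3 * (1 - (x * q * q)^-1 * y) ->
  B2 * (1 - x) = B1 * (1 - x * y) ->
  B3 * (1 - x * q) = B2 * (1 - x * q * y) ->
  Da * (1 - a^-1) = Ea * (1 - a^-1 * y) ->
  Db * (1 - b^-1) = Eb * (1 - b^-1 * y) ->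
  rec_coef0 x * (A1 * B1 * y / (Da * Db)) + rec_coef1 x * (A2 * B2 * y / (Da * Db))
    + rec_coef2 x * (A3 * B3 * y / (Da * Db))
  = rec_inhom x * (A3 * (1 - (x * q * q)^-1 * y) * (B1 * (1 - x * y)) * (y * q)
                   / (Ea * (1 - a^-1 * y) * (Eb * (1 - b^-1 * y))))
    - rec_inhom x * (A3 * B1 * y / (Ea * Eb)).
Proof.
move=> /and5P[x0 x1 xq1 xqq1 /and3P[xxq1 xxqq1 xxqqq1]] Ea0 Eb0 a_y b_y
  eA1 eA2 eB2 eB3 eDa eDb.
have -> : A1 = A2 * (1 - (x * q)^-1 * y) / (1 - (x * q)^-1).
  by rewrite -eA1 mulfK // subr_eq0 eq_sym invr_eq1.
have -> : A2 = A3 * (1 - (x * q * q)^-1 * y) / (1 - (x * q * q)^-1).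
  by rewrite -eA2 mulfK // subr_eq0 eq_sym invr_eq1.
have -> : B3 = B2 * (1 - x * q * y) / (1 - x * q) by rewrite -eB3 mulfK // subr_eq0 eq_sym.
have -> : B2 = B1 * (1 - x * y) / (1 - x) by rewrite -eB2 mulfK // subr_eq0 eq_sym.
have -> : Da = Ea * (1 - a^-1 * y) / (1 - a^-1).
  by rewrite -eDa mulfK // subr_eq0 eq_sym invr_eq1.
have -> : Db = Eb * (1 - b^-1 * y) / (1 - b^-1).
  by rewrite -eDb mulfK // subr_eq0 eq_sym invr_eq1.
rewrite /rec_coef1 /rec_coef2 /rec_beta /rec_coef0 /rec_inhom.
field_ctx.
Qed.

Definition prefactor_ratio x := - (x * q) * (1 - x * q) / (1 - x)
  * ((1 - a * x) * (1 - b * x)) / ((1 - x * q / a) * (1 - x * q / b)) / (a * b).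
Definition boundary_rat x := x * (1 - a^-1) * (1 - b^-1) / ((1 - a^-1 * x) * (1 - b^-1 * x)).
Definition term_rat x := x * (1 + x) * (1 - x) * (1 - a^-1) * (1 - b^-1)
  / ((1 - a^-1 * x) * (1 - b^-1 * x) * (1 - a * x) * (1 - b * x)).
Definition const_term := (1 - a * b) / ((1 - a) * (1 - b)).

(* P and Q stand for prefactor m and prefactor m * \sum_(1 <= j < m) rhs_term j. *)
Lemma rhs_rec_alg x P Q :
  rec_regular x ->
  a * x != 1 -> b * x != 1 -> a * (x * q) != 1 -> b * (x * q) != 1 ->
  a != x -> b != x -> a != x * q -> b != x * q -> a != x * q * q -> b != x * q * q ->
  rec_coef0 x * (P * const_term + boundary_rat x + (1 - a * b) * Q)
  + rec_coef1 x * (prefactor_ratio x * P * const_term + boundary_rat (x * q)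
                   + (1 - a * b) * (prefactor_ratio x * (Q + term_rat x)))
  + rec_coef2 x * (prefactor_ratio (x * q) * (prefactor_ratio x * P) * const_term
                   + boundary_rat (x * q * q)
                   + (1 - a * b) * (prefactor_ratio (x * q)
                        * (prefactor_ratio x * (Q + term_rat x) + term_rat (x * q))))
  = - rec_inhom x.
Proof.
move=> /and5P[? ? ? ? /and3P[? ? ?]] *.
rewrite /rec_coef1 /rec_coef2 /rec_beta /rec_coef0 /rec_inhom.
rewrite /prefactor_ratio /boundary_rat /term_rat /const_term.
field_ctx.
Qed.

Lemma rec_coef2_neq0_alg x :
  rec_regular x -> a != x * q * q -> b != x * q * q -> rec_coef2 x != 0.
Proof.
move=> /and5P[_ x1 xq1 xqq1 /and3P[_ xxqq1 xxqqq1]] a_xqq b_xqq.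
have subr_div_neq0 (c : F) : c != 0 -> c != x * q * q -> 1 - x * q * q / c != 0.
  by move=> c0 cx; rewrite -[1](divff c0) -mulrBl mulf_neq0 ?invr_eq0 // subr_eq0.
rewrite /rec_coef2 /rec_beta !(mulf_neq0, invr_eq0, oppr_eq0) //.
all: try exact: subr_div_neq0.
all: by rewrite subr_eq0 eq_sym ?invr_eq1.
Qed.

Hypothesis qpow_neq1 : forall j, (0 < j)%N -> q ^+ j != 1.

Lemma rec_regular_qpow m : (0 < m)%N -> rec_regular (q ^+ m).
Proof.
by move=> m_gt0; rewrite /rec_regular expf_neq0 // -exprD -!exprSr !qpow_neq1.
Qed.

Definition summand m k := qpoch (q ^- m) q k * qpoch (q ^+ m) q k * q ^+ k
  / (qpoch (q / a) q k * qpoch (q / b) q k).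
Definition lhs m := \sum_(k < m.+1) summand m k.
Definition certificate m k := rec_inhom (q ^+ m)
  * (qpoch (q ^- m.+2) q k * qpoch (q ^+ m) q k * q ^+ k / (qpoch a^-1 q k * qpoch b^-1 q k)).

Lemma summand_eq0 m k : (m < k)%N -> summand m k = 0.
Proof. by move=> lt_mk; rewrite /summand qpoch_qpowN_eq0 // !mul0r. Qed.

Lemma lhs_widen m n : (m <= n)%N -> lhs m = \sum_(k < n.+1) summand m k.
Proof.
elim: n => [|n IH]; first by rewrite leqn0 => /eqP ->.
rewrite leq_eqVlt => /orP[/eqP <- // | lt_mn].
by rewrite IH // [in RHS]big_ord_recr /= summand_eq0 ?addr0.
Qed.

Lemma summand_rec m k : (0 < m)%N -> (k <= m.+2)%N ->
  qpoch a^-1 q m.+3 != 0 -> qpoch b^-1 q m.+3 != 0 ->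
  rec_coef0 (q ^+ m) * summand m k + rec_coef1 (q ^+ m) * summand m.+1 k
    + rec_coef2 (q ^+ m) * summand m.+2 k
  = certificate m k.+1 - certificate m k.
Proof.
move=> m_gt0 le_km nzA nzB; have lt_km : (k < m.+3)%N by [].
rewrite /summand /certificate !qpochS !exprSr.
apply: summand_rec_alg; first exact: rec_regular_qpow.
- exact: qpoch_neq0_le (ltnW lt_km) nzA.
- exact: qpoch_neq0_le (ltnW lt_km) nzB.
- exact: qpochV_neq0_qpow a_neq0 nzA lt_km.
- exact: qpochV_neq0_qpow b_neq0 nzB lt_km.
- by rewrite -qpoch_shift [(_ * q)^-1]invfM mulfVK.
- by rewrite -qpoch_shift [(_ * q * q)^-1]invfM mulfVK.
- by rewrite -qpoch_shift.
- by rewrite -qpoch_shift.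
- by rewrite -qpoch_shift [_^-1 * q]mulrC.
- by rewrite -qpoch_shift [_^-1 * q]mulrC.
Qed.

Lemma lhs_rec m : (0 < m)%N -> qpoch a^-1 q m.+3 != 0 -> qpoch b^-1 q m.+3 != 0 ->
  rec_coef0 (q ^+ m) * lhs m + rec_coef1 (q ^+ m) * lhs m.+1 + rec_coef2 (q ^+ m) * lhs m.+2
  = - rec_inhom (q ^+ m).
Proof.
move=> m_gt0 nzA nzB.
rewrite (lhs_widen (leqW (leqnSn m))) (lhs_widen (leqnSn m.+1)) /lhs.
transitivity (\sum_(k < m.+3) (certificate m k.+1 - certificate m k)).
  rewrite !mulr_sumr -!big_split; apply: eq_bigr => k _.
  exact: summand_rec m_gt0 (ltn_ord k) nzA nzB.
rewrite -(big_mkord xpredT (fun k => certificate m k.+1 - certificate m k)) telescope_sumr //.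
by rewrite /certificate qpoch_qpowN_eq0 // !qpoch0 !mul0r mulr0 sub0r !mul1r invr1 mulr1.
Qed.

Definition prefactor n := (-1) ^+ n * q ^+ (n * n.+1)./2 * (1 - q ^+ n)
  * (qpoch a q n * qpoch b q n) / (qpoch (q / a) q n * qpoch (q / b) q n)
  * (1 / (a * b)) ^+ n.
Definition boundary n := (qpoch a^-1 q n * qpoch b^-1 q n)
  / ((1 - q ^+ n) * (qpoch a q n * qpoch b q n)) * (- (a * b)) ^+ n * q ^- (n * n.-1)./2.
Definition rhs_term j := ((1 + q ^+ j) * (qpoch a^-1 q j * qpoch b^-1 q j))
  / (qpoch a q j.+1 * qpoch b q j.+1) * (- (a * b)) ^+ j * q ^- (j * j.-1)./2.
Definition rhs n := prefactor n
  * (const_term + boundary n + (1 - a * b) * \sum_(1 <= j < n) rhs_term j).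

Variable N : nat.
Hypotheses (qa_N : qpoch (q / a) q N != 0) (qb_N : qpoch (q / b) q N != 0).
Hypotheses (a_N : qpoch a q N != 0) (b_N : qpoch b q N != 0).

Lemma prefactorS n : (0 < n)%N -> (n < N)%N ->
  prefactor n.+1 = prefactor_ratio (q ^+ n) * prefactor n.
Proof.
move=> n_gt0 lt_nN.
have qa_n := qpoch_neq0_le (ltnW lt_nN) qa_N.
have qb_n := qpoch_neq0_le (ltnW lt_nN) qb_N.
have a_qn : a != q ^+ n * q by rewrite -exprSr (qpoch_div_neq0_qpow a_neq0 qa_N).
have b_qn : b != q ^+ n * q by rewrite -exprSr (qpoch_div_neq0_qpow b_neq0 qb_N).
have qn1 := qpow_neq1 n_gt0.
have half_S : ((n.+1 * n.+2)./2 = (n * n.+1)./2 + n.+1)%N by rewrite half_mulnS mulnC.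
rewrite /prefactor /prefactor_ratio half_S exprD !qpochS !exprSr.
field_ctx.
Qed.

Lemma prefactor_boundary n : (0 < n)%N -> (n <= N)%N ->
  prefactor n * boundary n = boundary_rat (q ^+ n).
Proof.
move=> n_gt0 le_nN.
have qa_n := qpoch_neq0_le le_nN qa_N; have qb_n := qpoch_neq0_le le_nN qb_N.
have a_n := qpoch_neq0_le le_nN a_N; have b_n := qpoch_neq0_le le_nN b_N.
have a_qn := qpoch_div_neq0_qpow a_neq0 qa_N n_gt0 le_nN.
have b_qn := qpoch_div_neq0_qpow b_neq0 qb_N n_gt0 le_nN.
have qn1 := qpow_neq1 n_gt0.
have ab_n : (a * b) ^+ n != 0 by rewrite expf_neq0 // mulf_neq0.
have q_half : q ^+ (n * n.-1)./2 != 0 by rewrite expf_neq0.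
rewrite /prefactor /boundary /boundary_rat.
rewrite (qpochV_shift a_neq0 a_qn) (qpochV_shift b_neq0 b_qn).
rewrite half_mulnS exprD [(- (a * b)) ^+ n]exprNn expr_div_n expr1n -signr_odd.
by case: (odd n); rewrite ?expr0 ?expr1; field_ctx.
Qed.

Lemma prefactor_term n : (0 < n)%N -> (n < N)%N ->
  prefactor n * rhs_term n = term_rat (q ^+ n).
Proof.
move=> n_gt0 lt_nN; have le_nN := ltnW lt_nN.
have qa_n := qpoch_neq0_le le_nN qa_N; have qb_n := qpoch_neq0_le le_nN qb_N.
have a_n := qpoch_neq0_le le_nN a_N; have b_n := qpoch_neq0_le le_nN b_N.
have aqn1 := qpoch_neq0_factor a_N lt_nN; have bqn1 := qpoch_neq0_factor b_N lt_nN.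
have a_qn := qpoch_div_neq0_qpow a_neq0 qa_N n_gt0 le_nN.
have b_qn := qpoch_div_neq0_qpow b_neq0 qb_N n_gt0 le_nN.
have ab_n : (a * b) ^+ n != 0 by rewrite expf_neq0 // mulf_neq0.
have q_half : q ^+ (n * n.-1)./2 != 0 by rewrite expf_neq0.
rewrite /prefactor /rhs_term /term_rat.
rewrite (qpochV_shift a_neq0 a_qn) (qpochV_shift b_neq0 b_qn) !qpochS.
rewrite half_mulnS exprD [(- (a * b)) ^+ n]exprNn expr_div_n expr1n -signr_odd.
by case: (odd n); rewrite ?expr0 ?expr1; field_ctx.
Qed.

Lemma rhs_decomp n : (0 < n)%N -> (n <= N)%N ->
  rhs n = prefactor n * const_term + boundary_rat (q ^+ n)
          + (1 - a * b) * (prefactor n * \sum_(1 <= j < n) rhs_term j).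
Proof.
move=> n_gt0 le_nN.
by rewrite /rhs -(prefactor_boundary n_gt0 le_nN) !mulrDr [prefactor n * (_ * _)]mulrCA.
Qed.

Lemma prefactor_sumS n : (0 < n)%N -> (n < N)%N ->
  prefactor n.+1 * \sum_(1 <= j < n.+1) rhs_term j
  = prefactor_ratio (q ^+ n) * (prefactor n * \sum_(1 <= j < n) rhs_term j + term_rat (q ^+ n)).
Proof.
move=> n_gt0 lt_nN.
by rewrite big_nat_recr //= prefactorS // -prefactor_term //; ring.
Qed.

Lemma rhs_rec m : (0 < m)%N -> (m.+2 <= N)%N ->
  rec_coef0 (q ^+ m) * rhs m + rec_coef1 (q ^+ m) * rhs m.+1 + rec_coef2 (q ^+ m) * rhs m.+2
  = - rec_inhom (q ^+ m).
Proof.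
move=> m_gt0 le_m2N; have le_m1N := ltnW le_m2N; have le_mN := ltnW le_m1N.
rewrite (rhs_decomp m_gt0 le_mN) (rhs_decomp _ le_m1N) // (rhs_decomp _ le_m2N) //.
rewrite (prefactor_sumS _ le_m2N) // (prefactor_sumS m_gt0 le_m1N).
rewrite (prefactorS _ le_m2N) // (prefactorS m_gt0 le_m1N) !exprSr.
apply: rhs_rec_alg; first exact: rec_regular_qpow.
- exact: qpoch_neq0_factor a_N le_m1N.
- exact: qpoch_neq0_factor b_N le_m1N.
- by rewrite -exprSr (qpoch_neq0_factor a_N le_m2N).
- by rewrite -exprSr (qpoch_neq0_factor b_N le_m2N).
- exact: qpoch_div_neq0_qpow a_neq0 qa_N m_gt0 le_mN.
- exact: qpoch_div_neq0_qpow b_neq0 qb_N m_gt0 le_mN.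
- by rewrite -exprSr (qpoch_div_neq0_qpow a_neq0 qa_N).
- by rewrite -exprSr (qpoch_div_neq0_qpow b_neq0 qb_N).
- by rewrite -!exprSr (qpoch_div_neq0_qpow a_neq0 qa_N).
- by rewrite -!exprSr (qpoch_div_neq0_qpow b_neq0 qb_N).
Qed.

Lemma rec_coef2_neq0 m : (0 < m)%N -> (m.+2 <= N)%N -> rec_coef2 (q ^+ m) != 0.
Proof.
move=> m_gt0 le_m2N; apply: rec_coef2_neq0_alg; first exact: rec_regular_qpow.
- by rewrite -!exprSr (qpoch_div_neq0_qpow a_neq0 qa_N).
- by rewrite -!exprSr (qpoch_div_neq0_qpow b_neq0 qb_N).
Qed.

Hypothesis N_gt0 : (0 < N)%N.

Lemma lhs_rhs1 : lhs 1 = rhs 1.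
Proof.
have a_q : a != q by rewrite -[q]expr1 (qpoch_div_neq0_qpow a_neq0 qa_N).
have b_q : b != q by rewrite -[q]expr1 (qpoch_div_neq0_qpow b_neq0 qb_N).
rewrite (rhs_decomp (ltn0Sn 0) N_gt0) big_geq // !mulr0 addr0.
rewrite /lhs /summand /prefactor /boundary_rat /const_term.
rewrite !big_ord_recr big_ord0 /= !qpochS !qpoch0 !expr1 !expr0.
field_ctx.
Qed.

Lemma lhs_rhs2 : (1 < N)%N -> lhs 2 = rhs 2.
Proof.
move=> N_gt1.
have a_q : a != q by rewrite -[q]expr1 (qpoch_div_neq0_qpow a_neq0 qa_N).
have b_q : b != q by rewrite -[q]expr1 (qpoch_div_neq0_qpow b_neq0 qb_N).
have a_q2 : a != q * q by rewrite -expr2 (qpoch_div_neq0_qpow a_neq0 qa_N).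
have b_q2 : b != q * q by rewrite -expr2 (qpoch_div_neq0_qpow b_neq0 qb_N).
have aq1 : a * q != 1 by rewrite -[q]expr1 (qpoch_neq0_factor a_N).
have bq1 : b * q != 1 by rewrite -[q]expr1 (qpoch_neq0_factor b_N).
have q1 : q != 1 by rewrite -[q]expr1 qpow_neq1.
rewrite (rhs_decomp (ltn0Sn 1) N_gt1) (prefactor_sumS (ltn0Sn 0) N_gt1) big_geq // mulr0 add0r.
rewrite (prefactorS (ltn0Sn 0) N_gt1).
rewrite /lhs /summand /prefactor /prefactor_ratio /boundary_rat /term_rat /const_term.
rewrite !big_ord_recr big_ord0 /= !qpochS !qpoch0 !expr1 !expr0 expr2.
field_ctx.
Qed.

Lemma lhs_eq_rhs : lhs N = rhs N.
Proof.
apply: (@rec2_uniq _ (fun m => rec_coef0 (q ^+ m)) (fun m => rec_coef1 (q ^+ m))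
  (fun m => rec_coef2 (q ^+ m)) (fun m => - rec_inhom (q ^+ m)) lhs rhs N).
- exact: rec_coef2_neq0.
- move=> m m_gt0 le_m2N.
  by apply: lhs_rec; rewrite // qpochV_neq0 // (qpoch_neq0_le le_m2N).
- exact: rhs_rec.
- exact: lhs_rhs1.
- exact: lhs_rhs2.
- by rewrite N_gt0 leqnn.
Qed.

End Identity.

Theorem theorem2p7 (R : rcfType) (q a b : R[i]) (n : nat) :
  0 < `|q| < 1 -> (0 < n)%N ->
  a != 0 -> b != 0 ->
  (forall k, (k <= n)%N -> qpoch (q / a) q k != 0) ->
  (forall k, (k <= n)%N -> qpoch (q / b) q k != 0) ->
  qpoch a q n != 0 -> qpoch b q n != 0 ->
  \sum_(k < n.+1) (qpoch (q ^- n) q k * qpoch (q ^+ n) q k * q ^+ k)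
                    / (qpoch (q / a) q k * qpoch (q / b) q k)
  = (-1) ^+ n * q ^+ (n * n.+1)./2 * (1 - q ^+ n)
    * (qpoch a q n * qpoch b q n) / (qpoch (q / a) q n * qpoch (q / b) q n)
    * (1 / (a * b)) ^+ n
    * ( (1 - a * b) / ((1 - a) * (1 - b))
      + (qpoch a^-1 q n * qpoch b^-1 q n)
          / ((1 - q ^+ n) * (qpoch a q n * qpoch b q n))
          * (- (a * b)) ^+ n * q ^- (n * n.-1)./2
      + (1 - a * b) * \sum_(1 <= j < n)
          ((1 + q ^+ j) * (qpoch a^-1 q j * qpoch b^-1 q j))
            / (qpoch a q j.+1 * qpoch b q j.+1)
            * (- (a * b)) ^+ j * q ^- (j * j.-1)./2 ).
Proof.
move=> /andP[q_gt0 q_lt1] n_gt0 a_neq0 b_neq0 qa_n qb_n a_n b_n.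
have q_neq0 : q != 0 by rewrite -normr_gt0.
have qpow_neq1 j : (0 < j)%N -> q ^+ j != 1 := expr_neq1 q_lt1.
have a_neq1 : a != 1 by have := qpoch_neq0_factor a_n n_gt0; rewrite expr0 mulr1.
have b_neq1 : b != 1 by have := qpoch_neq0_factor b_n n_gt0; rewrite expr0 mulr1.
exact: (lhs_eq_rhs q_neq0 a_neq0 b_neq0 a_neq1 b_neq1 qpow_neq1
          (qa_n n (leqnn n)) (qb_n n (leqnn n)) a_n b_n n_gt0).
Qed.
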